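(* Let $A_1,\dots,A_m\in\mathbb{S}^n$, $b\in\mathbb{R}^m$, $C\in\mathbb{S}^n$. Assume $\mathcal{C}$ is compact and Assumption 1 holds for $p=n+1$. Let $R=\max_{X\in\mathcal{C}}\operatorname{tr}(X)$ and $f^\star$ the optimal value of (SDP). If $Y\in\mathcal{M}_{n+1}$ satisfies $\|\operatorname{grad}g(Y)\|\le\varepsilon_g$ and $\operatorname{Hess}g(Y)\succeq-\varepsilon_H\operatorname{Id}$, then $0\le 2(g(Y)-f^\star)\le\varepsilon_g\sqrt{R}+\varepsilon_H R$. If moreover all $X\in\mathcal{C}$ have the same trace and there exists a positive definite $X\in\mathcal{C}$, then $0\le 2(g(Y)-f^\star)\le\varepsilon_H R$.
   Context: $\mathbb{S}^n$: real symmetric $n\times n$ matrices; $\langle U,V\rangle=\operatorname{tr}(U^\top V)$, $\|\cdot\|$ the Frobenius norm. $\mathcal{A}(X)_i=\langle A_i,X\rangle$, $\mathcal{A}^*(\nu)=\sum_i\nu_iA_i$. $\mathcal{C}=\{X\in\mathbb{S}^n:\mathcal{A}(X)=b,\ X\succeq0\}$ (non-empty); (SDP): minimize $\langle C,X\rangle$ over $\mathcal{C}$. $\mathcal{M}_p=\{Y\in\mathbb{R}^{n\times p}:\mathcal{A}(YY^\top)=b\}$, $g(Y)=\langle CY,Y\rangle$. Assumption 1 (for $p$): either (a) $A_1Y,\dots,A_mY$ are linearly independent for all $Y\in\mathcal{M}_p$, or (b) $\operatorname{span}\{A_1Y,\dots,A_mY\}$ has constant dimension on an open neighborhood of $\mathcal{M}_p$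 in $\mathbb{R}^{n\times p}$. For $Y\in\mathcal{M}_p$: $T_Y=\{\dot Y:\langle A_iY,\dot Y\rangle=0\ \forall i\}$, $P_Y$ the orthogonal projection onto $T_Y$; $G_{ij}=\langle A_iY,A_jY\rangle$, $\mu=G^\dagger\mathcal{A}(CYY^\top)$, $S(Y)=C-\mathcal{A}^*(\mu)$. The Riemannian gradient is $\operatorname{grad}g(Y)=2S(Y)Y$ and the Riemannian Hessian is the operator $\operatorname{Hess}g(Y)[\dot Y]=2P_Y(S(Y)\dot Y)$ on $T_Y$; $\operatorname{Hess}g(Y)\succeq-\varepsilon_H\operatorname{Id}$ means $\langle\dot Y,\operatorname{Hess}g(Y)[\dot Y]\rangle\ge-\varepsilon_H\|\dot Y\|^2$ for all $\dot Y\in T_Y$. *)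

From HB Require Import structures.
From mathcomp Require Import all_boot all_order all_algebra.
From mathcomp Require Import all_classical all_reals all_analysis.
Set Implicit Arguments. Unset Strict Implicit. Unset Printing Implicit Defensive.
Import Order.TTheory GRing.Theory Num.Theory numFieldNormedType.Exports.
Local Open Scope classical_set_scope.
Local Open Scope ring_scope.

Section SDP.
Variable R : realType.

Definition frob (k l : nat) (U V : 'M[R]_(k, l)) : R := \tr (U^T *m V).
Definition fnorm (k l : nat) (U : 'M[R]_(k, l)) : R := Num.sqrt (frob U U).

Definition symmat (n : nat) (X : 'M[R]_n) : Prop := X^T = X.
Definition psd (n : nat) (X : 'M[R]_n) : Prop :=
  symmat X /\ forall v : 'cV[R]_n, 0 <= \tr (v^T *m X *m v).
Definition pd (n : nat) (X : 'M[R]_n) : Prop :=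
  symmat X /\ forall v : 'cV[R]_n, v != 0 -> 0 < \tr (v^T *m X *m v).

Variables (n m : nat) (A : 'I_m -> 'M[R]_n) (b : 'I_m -> R) (C : 'M[R]_n).

Definition Aop (X : 'M[R]_n) (i : 'I_m) : R := frob (A i) X.
Definition Aadj (nu : 'I_m -> R) : 'M[R]_n := \sum_i nu i *: A i.

Definition feas : set 'M[R]_n :=
  [set X | symmat X /\ (forall i, Aop X i = b i) /\ psd X].

Variable p : nat.

Definition Mp : set 'M[R]_(n, p) := [set Y | forall i, Aop (Y *m Y^T) i = b i].
Definition g (Y : 'M[R]_(n, p)) : R := frob (C *m Y) Y.

(* the matrix whose rows are vec(A_i Y); its rank = dim span{A_i Y} *)
Definition AYmx (Y : 'M[R]_(n, p)) : 'M[R]_(m, n * p) :=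
  \matrix_(i < m) mxvec (A i *m Y).

Definition assumption1 : Prop :=
  (forall Y, Mp Y -> row_free (AYmx Y))
  \/ (exists U : set 'M[R]_(n, p), open U /\ Mp `<=` U /\
        exists r : nat, forall Y, U Y -> \rank (AYmx Y) = r).

Definition TY (Y : 'M[R]_(n, p)) : set 'M[R]_(n, p) :=
  [set Yd | forall i, frob (A i *m Y) Yd = 0].

Definition PY (Y Z : 'M[R]_(n, p)) : 'M[R]_(n, p) :=
  xget 0 [set W | TY Y W /\ forall V, TY Y V -> frob (Z - W) V = 0].

Definition is_mp_pinv (k : nat) (G P : 'M[R]_k) : Prop :=
  G *m P *m G = G /\ P *m G *m P = P /\ (G *m P)^T = G *m P /\ (P *m G)^T = P *m G.
Definition mp_pinv (k : nat) (G : 'M[R]_k) : 'M[R]_k := xget 0 [set P | is_mp_pinv G P].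

Definition Gram (Y : 'M[R]_(n, p)) : 'M[R]_m :=
  \matrix_(i, j) frob (A i *m Y) (A j *m Y).
Definition mu (Y : 'M[R]_(n, p)) : 'cV[R]_m :=
  mp_pinv (Gram Y) *m \col_i Aop (C *m Y *m Y^T) i.
Definition Smat (Y : 'M[R]_(n, p)) : 'M[R]_n := C - Aadj (fun i => mu Y i 0).

Definition rgrad (Y : 'M[R]_(n, p)) : 'M[R]_(n, p) := 2%:R *: (Smat Y *m Y).
Definition rhess (Y Yd : 'M[R]_(n, p)) : 'M[R]_(n, p) := 2%:R *: PY Y (Smat Y *m Yd).

Definition hess_ge (Y : 'M[R]_(n, p)) (epsH : R) : Prop :=
  forall Yd, TY Y Yd -> - epsH * fnorm Yd ^+ 2 <= frob Yd (rhess Y Yd).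

End SDP.

From HB Require Import structures.
From mathcomp Require Import all_boot all_order all_algebra.
From mathcomp Require Import all_classical all_reals all_analysis.
From mathcomp Require Import ring lra.
Import Order.TTheory GRing.Theory Num.Theory numFieldNormedType.Exports.
Set Implicit Arguments. Unset Strict Implicit. Unset Printing Implicit Defensive.
Local Open Scope ring_scope.

(* Put S = S(Y) and Z = Y Y^T; Z is feasible and <A_i, Z> = b_i = <A_i, X*>, so
   g(Y) - f* = <S, Z> - <S, X*>.  The first term is <grad g(Y), Y> / 2, at most
   eps_g sqrt(tr Z) / 2 by Cauchy-Schwarz.  As Y has n + 1 columns it has a kernel
   vector z, and every x z^T is tangent at Y; the Hessian condition on these
   directions gives 2 S + eps_H I >= 0, hence -2 <S, X*> <= eps_H tr X*.  For the
   second claim, S Y is tangent, so X0 + t (S Z + Z S) stays feasible for a positive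
   definite feasible X0 and small t > 0, and a constant trace forces tr (S Z) = 0. *)

Lemma quadratic_ge0_discr (R : realFieldType) (a b c : R) : 0 <= c ->
  (forall t, 0 <= a + 2%:R * t * b + t ^+ 2 * c) -> b ^+ 2 <= a * c.
Proof.
move=> c_ge0 q_ge0; have [c_gt0|] := boolP (0 < c).
  have := q_ge0 (- b / c).
  have -> : a + 2%:R * (- b / c) * b + (- b / c) ^+ 2 * c = a - b ^+ 2 / c.
    by field; rewrite gt_eqF.
  by rewrite subr_ge0 ler_pdivrMr.
rewrite lt_def c_ge0 andbT negbK => /eqP c0; rewrite c0 mulr0.
have [-> //|b_neq0] := eqVneq b 0; first by rewrite expr0n.
have := q_ge0 (- (a + 1) / (2%:R * b)).
have -> : a + 2%:R * (- (a + 1) / (2%:R * b)) * b + (- (a + 1) / (2%:R * b)) ^+ 2 * c = -1.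
  by rewrite c0; field; rewrite b_neq0.
by rewrite ler0N1.
Qed.

Section Frobenius.
Variable R : realType.
Implicit Types k l q : nat.

Fact frob_is_linear k l (U : 'M[R]_(k, l)) : linear_for *%R (frob U).
Proof. by move=> a V W; rewrite /frob mulmxDr -scalemxAr mxtraceD mxtraceZ. Qed.

HB.instance Definition _ k l (U : 'M[R]_(k, l)) :=
  GRing.isLinear.Build R 'M[R]_(k, l) R _ (frob U) (frob_is_linear U).

Lemma frobC k l (U V : 'M[R]_(k, l)) : frob U V = frob V U.
Proof. by rewrite /frob -mxtrace_tr trmx_mul trmxK. Qed.

Lemma frobDl k l (U V W : 'M[R]_(k, l)) : frob (U + V) W = frob U W + frob V W.
Proof. by rewrite frobC linearD /= !(frobC W). Qed.

Lemma frobZl k l (U V : 'M[R]_(k, l)) a : frob (a *: U) V = a * frob U V.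
Proof. by rewrite frobC linearZ /= frobC. Qed.

Lemma frobBl k l (U V W : 'M[R]_(k, l)) : frob (U - V) W = frob U W - frob V W.
Proof. by rewrite frobC linearB /= !(frobC W). Qed.

Lemma frob_suml k l (I : Type) (r : seq I) (P : pred I) (F : I -> 'M[R]_(k, l)) W :
  frob (\sum_(i <- r | P i) F i) W = \sum_(i <- r | P i) frob (F i) W.
Proof. by rewrite frobC linear_sum; apply: eq_bigr => i _; rewrite frobC. Qed.

Lemma frob_tr k l (U V : 'M[R]_(k, l)) : frob U^T V^T = frob U V.
Proof. by rewrite /frob trmxK mxtrace_mulC -/(frob V U) frobC. Qed.

Lemma frob_mull k l q (X : 'M[R]_(k, l)) (U : 'M[R]_(l, q)) V :
  frob (X *m U) V = frob U (X^T *m V).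
Proof. by rewrite /frob trmx_mul mulmxA. Qed.

Lemma frob_mulr k l q (U : 'M[R]_(k, l)) (Y : 'M[R]_(l, q)) V :
  frob (U *m Y) V = frob U (V *m Y^T).
Proof. by rewrite /frob trmx_mul -mulmxA mxtrace_mulC mulmxA. Qed.

Lemma frob_col k l (U V : 'M[R]_(k, l)) : frob U V = \sum_j frob (col j U) (col j V).
Proof.
apply: eq_bigr => j _; rewrite /frob /mxtrace big_ord1 !mxE.
by apply: eq_bigr => i _; rewrite !mxE.
Qed.

Lemma frob_self k l (U : 'M[R]_(k, l)) : frob U U = \sum_j \sum_i U i j ^+ 2.
Proof.
rewrite frob_col; apply: eq_bigr => j _; rewrite /frob /mxtrace big_ord1 !mxE.
by apply: eq_bigr => i _; rewrite !mxE expr2.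
Qed.

Lemma frob_ge0 k l (U : 'M[R]_(k, l)) : 0 <= frob U U.
Proof. by rewrite frob_self; do 2 apply: sumr_ge0 => ? _; rewrite sqr_ge0. Qed.

Lemma frob_eq0 k l (U : 'M[R]_(k, l)) : (frob U U == 0) = (U == 0).
Proof.
apply/idP/eqP => [|->]; last by rewrite /frob mulmx0 mxtrace0.
rewrite frob_self psumr_eq0 => [/allP U0|j _]; last first.
  by apply: sumr_ge0 => i _; rewrite sqr_ge0.
apply/matrixP => i j; have /(_ (mem_index_enum j)) := U0 j.
rewrite psumr_eq0 => [/allP/(_ i (mem_index_enum i))|i' _]; last by rewrite sqr_ge0.
by rewrite sqrf_eq0 mxE => /eqP.
Qed.

Lemma frob_gt0 k l (U : 'M[R]_(k, l)) : U != 0 -> 0 < frob U U.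
Proof. by rewrite lt_def frob_eq0 frob_ge0 andbT. Qed.

Lemma sqr_fnorm k l (U : 'M[R]_(k, l)) : fnorm U ^+ 2 = frob U U.
Proof. exact/sqr_sqrtr/frob_ge0. Qed.

Lemma frob_outer k l (U : 'M[R]_(k, 1)) (V : 'M[R]_(l, 1)) (M : 'M[R]_k) :
  frob (U *m V^T) (M *m (U *m V^T)) = frob U (M *m U) * frob V V.
Proof.
rewrite /frob trmx_mul trmxK -mulmxA mxtrace_mulC !mulmxA -(mulmxA _ V^T).
by rewrite /mxtrace !big_ord1 [in LHS]mxE big_ord1.
Qed.

End Frobenius.

Section Semidefinite.
Variable R : realType.
Implicit Types k l : nat.

Lemma psdE k (X : 'M[R]_k) :
  psd X <-> symmat X /\ forall v : 'cV[R]_k, 0 <= frob v (X *m v).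
Proof. by split=> -[sX hX]; split=> // v; have := hX v; rewrite /frob mulmxA. Qed.

Lemma frob_symmx k l (X : 'M[R]_k) (U V : 'M[R]_(k, l)) :
  symmat X -> frob U (X *m V) = frob V (X *m U).
Proof. by move=> sX; rewrite frobC frob_mull sX. Qed.

Lemma psd_form_ge0 k l (X : 'M[R]_k) (U : 'M[R]_(k, l)) : psd X -> 0 <= frob U (X *m U).
Proof.
move=> /psdE[_ hX]; rewrite frob_col; apply: sumr_ge0 => j _.
by rewrite !colE -mulmxA; apply: hX.
Qed.

Lemma psd_CauchySchwarz k l (X : 'M[R]_k) (U V : 'M[R]_(k, l)) : psd X ->
  frob U (X *m V) ^+ 2 <= frob U (X *m U) * frob V (X *m V).
Proof.
move=> hX; apply: quadratic_ge0_discr => [|t]; first exact: psd_form_ge0.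
have := psd_form_ge0 (U + t *: V) hX.
rewrite mulmxDr -scalemxAr !frobDl !frobZl !linearD !linearZ /=.
by rewrite (frob_symmx V U hX.1); congr (_ <= _); ring.
Qed.

Lemma psd1 k : psd (1%:M : 'M[R]_k).
Proof. by apply/psdE; split=> [|v]; rewrite ?/symmat ?trmx1 // mul1mx frob_ge0. Qed.

Lemma frob_CauchySchwarz k l (U V : 'M[R]_(k, l)) : frob U V ^+ 2 <= frob U U * frob V V.
Proof. by have := psd_CauchySchwarz U V (psd1 k); rewrite !mul1mx. Qed.

Lemma frob_le_fnorm k l (U V : 'M[R]_(k, l)) : frob U V <= fnorm U * fnorm V.
Proof.
rewrite /fnorm -sqrtrM ?frob_ge0 //; apply: le_trans (ler_norm _) _.
by rewrite -sqrtr_sqr ler_wsqrtr // frob_CauchySchwarz.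
Qed.

Lemma frob_delta k (X : 'M[R]_k) i j :
  frob (delta_mx i 0 : 'cV[R]_k) (X *m delta_mx j 0) = X i j.
Proof. by rewrite /frob trmx_delta -colE -rowE /mxtrace big_ord1 !mxE. Qed.

Lemma psd_entry k (X : 'M[R]_k) i j : psd X -> X i j ^+ 2 <= X i i * X j j.
Proof. by move=> hX; rewrite -!frob_delta psd_CauchySchwarz. Qed.

Lemma psd_diag_ge0 k (X : 'M[R]_k) i : psd X -> 0 <= X i i.
Proof. by move=> hX; rewrite -frob_delta psd_form_ge0. Qed.

Lemma psd_diag_eq0 k (X : 'M[R]_k) i j : psd X -> X j j = 0 -> X j i = 0.
Proof.
move=> hX Xjj; apply/eqP; rewrite -sqrf_eq0 eq_le sqr_ge0 andbT.
by have := psd_entry j i hX; rewrite Xjj mul0r.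
Qed.

Lemma frob_outer_self k (U V : 'cV[R]_k) : frob V (U *m U^T *m V) = frob U V ^+ 2.
Proof.
rewrite -mulmxA frobC frob_mull frob_self /frob /mxtrace !big_ord1.
by rewrite !mxE expr2.
Qed.

Section SchurComplement.
Variables (k : nat) (X : 'M[R]_k) (i : 'I_k).
Hypothesis hX : psd X.
Let a := X i i.
Let c := col i X.

(* No hypothesis on [a] is needed: if [a = 0] then [a^-1 = 0]. *)
Lemma psd_sub_outer : psd (X - a^-1 *: (c *m c^T)).
Proof.
have sX := hX.1; apply/psdE; split=> [|v].
  by rewrite /symmat linearB linearZ /= trmx_mul trmxK sX.
have [->|a_neq0] := eqVneq a 0; first by rewrite invr0 scale0r subr0 psd_form_ge0.
have a_gt0 : 0 < a by rewrite lt_def a_neq0 psd_diag_ge0.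
rewrite mulmxBl -scalemxAl linearB linearZ /= frob_outer_self subr_ge0.
rewrite ler_pdivrMl // /c colE frob_mull sX.
by rewrite -[a in a * _]frob_delta psd_CauchySchwarz.
Qed.

Lemma psd_sub_outer_support :
  [set j | (X - a^-1 *: (c *m c^T)) j j != 0] \subset [set j | X j j != 0] :\ i.
Proof.
apply/fintype.subsetP => j; rewrite !inE !mxE big_ord1 !mxE.
have [->|_] := eqVneq j i.
  rewrite -/a; have [->|a_neq0] := eqVneq a 0; first by rewrite invr0 mul0r subrr eqxx.
  by rewrite mulKf // subrr eqxx.
rewrite /=; apply: contra => /eqP Xjj.
by rewrite (psd_diag_eq0 i hX Xjj) Xjj mulr0 mulr0 subrr.
Qed.

End SchurComplement.

Lemma psd_sum_outer k (X : 'M[R]_k) : psd X ->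
  exists s : seq 'cV[R]_k, X = \sum_(u <- s) u *m u^T.
Proof.
have [N] := ubnP #|[set j | X j j != 0]|; elim: N X => // N IH X supp_lt hX.
have [i Xii_neq0 | diag0] := pickP (fun j => X j j != 0); last first.
  exists [::]; rewrite big_nil; apply/matrixP => j l; rewrite mxE.
  by apply: psd_diag_eq0 => //; apply/eqP/negbFE/diag0.
set a := X i i in Xii_neq0; set c := col i X.
have a_gt0 : 0 < a by rewrite lt_def Xii_neq0 psd_diag_ge0.
have [|s Xs] := IH _ _ (psd_sub_outer i hX).
  apply: leq_ltn_trans (subset_leq_card (psd_sub_outer_support i hX)) _.
  by move: supp_lt; rewrite (cardsD1 i) inE Xii_neq0.
exists ((Num.sqrt a)^-1 *: c :: s); rewrite big_cons -Xs linearZ /=.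
rewrite -scalemxAl -scalemxAr scalerA -invfM -expr2 sqr_sqrtr ?ltW //.
by rewrite addrC subrK.
Qed.

Lemma psd_mxtrace_mul_ge0 k (M X : 'M[R]_k) : psd M -> psd X -> 0 <= \tr (M *m X).
Proof.
move=> hM /psd_sum_outer[s ->]; rewrite mulmx_sumr raddf_sum /=.
apply: sumr_ge0 => u _; rewrite mulmxA mxtrace_mulC mulmxA -mulmxA.
exact: psd_form_ge0.
Qed.

Lemma pd_psd k (X : 'M[R]_k) : pd X -> psd X.
Proof.
move=> [sX hX]; split=> // v; have [->|v_neq0] := eqVneq v 0.
  by rewrite mulmx0 mxtrace0.
exact/ltW/hX.
Qed.

Lemma pd_unit k (X : 'M[R]_k) : pd X -> X \in unitmx.
Proof.
move=> [_ hX]; rewrite -row_free_unit -kermx_eq0; apply: contraT => /rowV0Pn[w].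
move=> /sub_kermxP wX0 w_neq0; have := hX w^T; rewrite trmx_eq0 trmxK wX0 mul0mx.
by rewrite mxtrace0 ltxx => /(_ w_neq0).
Qed.

Lemma pd_dominates k l (X0 : 'M[R]_k) (F : 'M[R]_(l, k)) : pd X0 ->
  exists2 c, 0 <= c & forall v : 'cV[R]_k, frob (F *m v) (F *m v) <= c * frob v (X0 *m v).
Proof.
(* Cauchy-Schwarz for the X0-form between v U^T and W = X0^-1 F^T, with U = F v. *)
move=> X0_pd; have X0_psd := pd_psd X0_pd.
set W := invmx X0 *m F^T; exists (frob W (X0 *m W)); first exact: psd_form_ge0.
move=> v; set U := F *m v.
have cross : frob (v *m U^T) (X0 *m W) = frob U U.
  by rewrite /W mulKVmx ?pd_unit // frob_mulr trmxK -frob_mull.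
have := psd_CauchySchwarz (v *m U^T) W X0_psd; rewrite cross frob_outer.
have [->|U_neq0] := eqVneq U 0.
  by rewrite /frob mulmx0 mxtrace0 => _; rewrite mulr_ge0 ?psd_form_ge0.
move=> CS; rewrite -(ler_pM2l (frob_gt0 U_neq0)) -expr2 (le_trans CS) //; lra.
Qed.

Lemma psd_add_scaled k (X0 H : 'M[R]_k) c : psd X0 -> symmat H -> 0 <= c ->
  (forall v : 'cV[R]_k, - (c * frob v (X0 *m v)) <= frob v (H *m v)) ->
  psd (X0 + (1 + c)^-1 *: H).
Proof.
move=> X0_psd H_sym c_ge0 H_ge; apply/psdE; split=> [|v].
  by rewrite /symmat linearD linearZ /= X0_psd.1 H_sym.
have c1_gt0 : 0 < 1 + c by rewrite ltr_wpDr.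
rewrite mulmxDl -scalemxAl linearD linearZ /= -(pmulr_rge0 _ c1_gt0).
rewrite mulrDr mulrA divff ?gt_eqF // mul1r.
by have := H_ge v; have := psd_form_ge0 v X0_psd; lra.
Qed.

Definition anticomm k (U V : 'M[R]_k) := U *m V + V *m U.

Lemma anticomm_sym k (U V : 'M[R]_k) : symmat U -> symmat V -> symmat (anticomm U V).
Proof. by move=> U_sym V_sym; rewrite /symmat linearD /= !trmx_mul U_sym V_sym addrC. Qed.

Lemma mxtrace_anticomm k (U V : 'M[R]_k) : \tr (anticomm U V) = 2%:R * \tr (U *m V).
Proof. by rewrite mxtraceD (mxtrace_mulC V) mulr_natl mulr2n. Qed.

Lemma anticomm_gram_form_ge k l (S : 'M[R]_k) (F : 'M[R]_(l, k)) (v : 'cV[R]_k) :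
  symmat S -> - (frob (F *m S *m v) (F *m S *m v) + frob (F *m v) (F *m v))
              <= frob v (anticomm S (F^T *m F) *m v).
Proof.
move=> S_sym; have -> : frob v (anticomm S (F^T *m F) *m v)
    = 2%:R * frob (F *m v) (F *m S *m v).
  rewrite mulmxDl linearD /= -mulmxA frob_symmx // -!mulmxA frob_mull trmxK.
  by rewrite -frob_mull !mulmxA mulr_natl mulr2n.
have := frob_ge0 (F *m S *m v + F *m v).
by rewrite frobDl !linearD /= (frobC (F *m v)); lra.
Qed.

End Semidefinite.

Section LinearAlgebra.
Variable R : realType.

Lemma exists_orthogonal_residual k l K (f : 'I_K -> 'M[R]_(k, l)) (Z : 'M[R]_(k, l)) :
  exists c : 'I_K -> R, forall i, frob (f i) (Z - \sum_j c j *: f j) = 0.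
Proof.
(* Gram-Schmidt: W0 and W1 are the residuals of Z and of f 0 against the other
   f j, and W0 - al W1 is also orthogonal to f 0. *)
elim: K f Z => [|K IH] f Z; first by exists (fun=> 0) => -[].
pose f' j := f (lift ord0 j).
have [c0 W0_perp] := IH f' Z; have [d W1_perp] := IH f' (f ord0).
set W0 := Z - _ in W0_perp; set W1 := f ord0 - _ in W1_perp.
pose al := frob W1 W0 / frob W1 W1.
exists (fun i => if unlift ord0 i is Some j then c0 j - al * d j else al).
have -> : Z - \sum_i (if unlift ord0 i is Some j then c0 j - al * d j else al) *: f i
    = W0 - al *: W1.
  rewrite big_ord_recl unlift_none.
  under eq_bigr do rewrite liftK scalerBl -scalerA.
  by rewrite sumrB -scaler_sumr /W0 /W1 scalerBr -addrA -opprD addrCA.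
have W_perp j : frob (f' j) (W0 - al *: W1) = 0.
  by rewrite linearB linearZ /= W0_perp W1_perp mulr0 subr0.
move=> i; case: (unliftP ord0 i) => [j ->|->]; first exact: W_perp.
have -> : f ord0 = W1 + \sum_j d j *: f' j by rewrite subrK.
rewrite frobDl [frob (\sum_j _) _]frobC linear_sum big1 => [|j _]; last first.
  by rewrite linearZ /= frobC W_perp mulr0.
rewrite addr0 linearB linearZ /=.
have [W1_0|W1_neq0] := eqVneq (frob W1 W1) 0.
  by move/eqP: W1_0; rewrite frob_eq0 => /eqP ->; rewrite frobC !linear0 mulr0 subrr.
by rewrite /al divfK // subrr.
Qed.

Lemma row_free_mul_trmx_unit k l (B : 'M[R]_(k, l)) : row_free B -> B *m B^T \in unitmx.
Proof.
move=> B_free; rewrite -row_free_unit -kermx_eq0; apply: contraT.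
move=> /rowV0Pn[w /sub_kermxP wBBt0 w_neq0].
have /eqP : frob (w *m B) (w *m B) = 0 by rewrite frob_mulr -mulmxA wBBt0 linear0.
by rewrite frob_eq0 (mulmx_free_eq0 _ B_free) (negbTE w_neq0).
Qed.

Lemma full_rank_factorization k l (G : 'M[R]_(k, l)) :
  exists r (L : 'M[R]_(k, r)) (B : 'M[R]_(r, l)),
    [/\ row_free L^T, row_free B & G = L *m B].
Proof.
have GLB : G = G *m pinvmx (row_base G) *m row_base G by rewrite mulmxKpV ?eq_row_base.
exists (\rank G), (G *m pinvmx (row_base G)), (row_base G); split=> //.
  rewrite /row_free mxrank_tr eqn_leq rank_leq_col /=.
  by have := mxrankM_maxl (G *m pinvmx (row_base G)) (row_base G); rewrite -GLB.
exact: row_base_free.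
Qed.

Lemma mp_pinv_full_rank k r (L : 'M[R]_(k, r)) (B : 'M[R]_(r, k)) :
  row_free L^T -> row_free B ->
  is_mp_pinv (L *m B) (B^T *m invmx (B *m B^T) *m invmx (L^T *m L) *m L^T).
Proof.
move=> L_free B_free.
have BBu := row_free_mul_trmx_unit B_free.
have LLu : L^T *m L \in unitmx by have := row_free_mul_trmx_unit L_free; rewrite trmxK.
have BBsym : (B *m B^T)^T = B *m B^T by rewrite trmx_mul trmxK.
have LLsym : (L^T *m L)^T = L^T *m L by rewrite trmx_mul trmxK.
set P := _ *m L^T.
have GP : L *m B *m P = L *m invmx (L^T *m L) *m L^T.
  by rewrite /P !mulmxA -(mulmxA L B) mulmxK.
have PG : P *m (L *m B) = B^T *m invmx (B *m B^T) *m B.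
  by rewrite /P !mulmxA -(mulmxA _ L^T L) mulmxKV.
split; [|split; [|split]].
- by rewrite GP !mulmxA -(mulmxA _ L^T L) mulmxKV.
- by rewrite PG /P !mulmxA -(mulmxA _ B B^T) mulmxKV.
- by rewrite GP !trmx_mul trmxK trmx_inv LLsym mulmxA.
- by rewrite PG !trmx_mul trmxK trmx_inv BBsym mulmxA.
Qed.

Lemma mp_pinvP k (G : 'M[R]_k) : is_mp_pinv G (mp_pinv G).
Proof.
have [r [L [B [L_free B_free GLB]]]] := full_rank_factorization G.
by apply: xgetPex; rewrite GLB; eexists; apply: mp_pinv_full_rank.
Qed.

Lemma exists_kernel_vector k l (Y : 'M[R]_(k, l)) :
  (k < l)%N -> exists2 z : 'cV[R]_l, z != 0 & Y *m z = 0.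
Proof.
move=> lt_kl; have : kermx Y^T != 0.
  by rewrite -mxrank_eq0 mxrank_ker subn_eq0 -ltnNge (leq_ltn_trans (rank_leq_col Y^T)).
case/rowV0Pn=> w /sub_kermxP wY0 w_neq0; exists w^T; first by rewrite trmx_eq0.
by rewrite -[Y]trmxK -trmx_mul wY0 trmx0.
Qed.

End LinearAlgebra.

Section Certificate.
Variable R : realType.
Variables (n m : nat) (A : 'I_m -> 'M[R]_n) (C : 'M[R]_n).
Hypotheses (A_sym : forall i, symmat (A i)) (C_sym : symmat C).

Lemma Smat_sym p (Y : 'M[R]_(n, p)) : symmat (Smat A C Y).
Proof.
rewrite /symmat /Smat /Aadj linearB /= C_sym linear_sum /=; congr (_ - _).
by apply: eq_bigr => j _; rewrite linearZ /= A_sym.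
Qed.

Lemma Gram_mul_col p (Y : 'M[R]_(n, p)) (c : 'I_m -> R) i :
  (Gram A Y *m \col_j c j) i 0 = frob (A i *m Y) (\sum_j c j *: (A j *m Y)).
Proof. by rewrite !mxE linear_sum; apply: eq_bigr => j _; rewrite !mxE linearZ /= mulrC. Qed.

Lemma Smat_mul_tangent p (Y : 'M[R]_(n, p)) : TY A Y (Smat A C Y *m Y).
Proof.
have [c c_perp] := exists_orthogonal_residual (fun j => A j *m Y) (C *m Y).
have rhsE : \col_j Aop A (C *m Y *m Y^T) j = Gram A Y *m \col_j c j.
  apply/matrixP => j z; rewrite ord1 Gram_mul_col mxE /Aop -frob_mulr.
  by apply/eqP; rewrite -subr_eq0 -linearB; apply/eqP/c_perp.
have muE : Gram A Y *m mu A C Y = \col_j Aop A (C *m Y *m Y^T) j.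
  by have [GPG _] := mp_pinvP (Gram A Y); rewrite /mu rhsE !mulmxA GPG.
have mu_col : \col_j mu A C Y j 0 = mu A C Y by apply/matrixP => j z; rewrite ord1 mxE.
move=> i; rewrite /Smat mulmxBl linearB /= /Aadj mulmx_suml.
under eq_bigr do rewrite -scalemxAl.
by rewrite -Gram_mul_col mu_col muE mxE /Aop -frob_mulr subrr.
Qed.

Lemma frob_PY p (Y Z V : 'M[R]_(n, p)) : TY A Y V -> frob V (PY A Y Z) = frob V Z.
Proof.
move=> V_tan; have [c c_perp] := exists_orthogonal_residual (fun i => A i *m Y) Z.
have proj_ex : exists W, TY A Y W /\ forall U, TY A Y U -> frob (Z - W) U = 0.
  exists (Z - \sum_j c j *: (A j *m Y)); split=> [//|W W_tan].
  rewrite subKr frobC linear_sum big1 // => j _.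
  by rewrite linearZ /= frobC W_tan mulr0.
have [_ PY_perp] := xgetPex 0 proj_ex.
by apply/eqP; rewrite eq_sym -subr_eq0 -linearB /= frobC PY_perp.
Qed.

Lemma hess_ge_psd (Y : 'M[R]_(n, n.+1)) epsH :
  hess_ge A C Y epsH -> psd (2%:R *: Smat A C Y + epsH *: 1%:M).
Proof.
move=> hess; apply/psdE; split=> [|x].
  by rewrite /symmat linearD !linearZ /= Smat_sym trmx1.
have [z z_neq0 Yz0] := exists_kernel_vector Y (ltnSn n).
have xz_tan : TY A Y (x *m z^T).
  by move=> i; rewrite frobC frob_mulr trmxK -mulmxA Yz0 mulmx0 linear0.
have := hess _ xz_tan; rewrite /rhess linearZ /= frob_PY // sqr_fnorm.
rewrite -[X in frob _ X]mul1mx !frob_outer mul1mx => hess_xz.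
rewrite mulmxDl -!scalemxAl linearD !linearZ /= mul1mx.
by rewrite -(pmulr_lge0 _ (frob_gt0 z_neq0)) mulrDl; lra.
Qed.

Lemma gradient_bound p (Y : 'M[R]_(n, p)) :
  2%:R * frob (Smat A C Y) (Y *m Y^T) <= fnorm (rgrad A C Y) * Num.sqrt (\tr (Y *m Y^T)).
Proof.
have -> : \tr (Y *m Y^T) = frob Y Y by rewrite /frob mxtrace_mulC.
by rewrite -frob_mulr -frobZl; apply: frob_le_fnorm.
Qed.

Lemma hessian_bound (Y : 'M[R]_(n, n.+1)) epsH X : hess_ge A C Y epsH -> psd X ->
  - (2%:R * frob (Smat A C Y) X) <= epsH * \tr X.
Proof.
move=> hess X_psd; have := psd_mxtrace_mul_ge0 (hess_ge_psd hess) X_psd.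
by rewrite mulmxDl mxtraceD -!scalemxAl !mxtraceZ mul1mx /frob Smat_sym; lra.
Qed.

Lemma anticomm_Smat_gram_tangent p (Y : 'M[R]_(n, p)) i :
  frob (A i) (anticomm (Smat A C Y) (Y *m Y^T)) = 0.
Proof.
set S := Smat A C Y; set Z := Y *m Y^T.
have SZ_tan j : frob (A j) (S *m Z) = 0 by rewrite mulmxA -frob_mulr Smat_mul_tangent.
rewrite linearD /= SZ_tan add0r -frob_tr A_sym trmx_mul Smat_sym.
by rewrite /Z trmx_mul trmxK SZ_tan.
Qed.

Lemma gram_sym p (Y : 'M[R]_(n, p)) : symmat (Y *m Y^T).
Proof. by rewrite /symmat trmx_mul trmxK. Qed.

Lemma g_gram p (Y : 'M[R]_(n, p)) : g C Y = frob C (Y *m Y^T).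
Proof. exact: frob_mulr. Qed.

Variable b : 'I_m -> R.

Lemma feas_gram p (Y : 'M[R]_(n, p)) : Mp A b Y -> feas A b (Y *m Y^T).
Proof.
move=> Y_Mp; split; first exact: gram_sym.
split=> //; apply/psdE; split=> [|v]; first exact: gram_sym.
by have := frob_ge0 (Y^T *m v); rewrite frob_mull trmxK mulmxA.
Qed.

Lemma frob_Smat_affine p (Y : 'M[R]_(n, p)) X : (forall i, Aop A X i = b i) ->
  frob (Smat A C Y) X = frob C X - \sum_i mu A C Y i 0 * b i.
Proof.
move=> X_aff; rewrite /Smat frobBl /Aadj frob_suml; congr (_ - _).
by apply: eq_bigr => i _; rewrite frobZl -X_aff.
Qed.

Lemma frob_Smat_gram_eq0 p (Y : 'M[R]_(n, p)) :
  (forall X1 X2, feas A b X1 -> feas A b X2 -> \tr X1 = \tr X2) ->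
  (exists2 X, feas A b X & pd X) ->
  frob (Smat A C Y) (Y *m Y^T) = 0.
Proof.
move=> const_tr [X0 X0_feas X0_pd]; set S := Smat A C Y; set H := anticomm S (Y *m Y^T).
have [c1 c1_ge0 dom1] := pd_dominates (Y^T *m S) X0_pd.
have [c2 c2_ge0 dom2] := pd_dominates Y^T X0_pd.
pose t := (1 + (c1 + c2))^-1.
have t_gt0 : 0 < t by rewrite invr_gt0 ltr_wpDr ?addr_ge0.
have X0tH_psd : psd (X0 + t *: H).
  apply: psd_add_scaled (pd_psd X0_pd) (anticomm_sym (Smat_sym Y) (gram_sym Y)) _ _.
    exact: addr_ge0.
  move=> v; have := anticomm_gram_form_ge Y^T v (Smat_sym Y).
  by rewrite trmxK; have := dom1 v; have := dom2 v; lra.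
have X0tH_feas : feas A b (X0 + t *: H).
  split; first exact: X0tH_psd.1.
  split=> // i; rewrite /Aop linearD linearZ /= anticomm_Smat_gram_tangent.
  by rewrite mulr0 addr0; apply: X0_feas.2.1.
move: (const_tr _ _ X0tH_feas X0_feas) => /eqP.
rewrite mxtraceD mxtraceZ mxtrace_anticomm -subr_eq0 addrC addKr !mulf_eq0.
by rewrite gt_eqF // pnatr_eq0 /frob Smat_sym => /eqP.
Qed.

End Certificate.

Theorem corollary3 (R : realType) (n m : nat) (A : 'I_m -> 'M[R]_n)
  (b : 'I_m -> R) (C : 'M[R]_n)
  (hA : forall i, symmat (A i)) (hC : symmat C)
  (hne : exists X, feas A b X)
  (hcpt : compact (feas A b))
  (hass : assumption1 A b n.+1)
  (Rt : R) (hRt : (exists2 X, feas A b X & \tr X = Rt) /\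
                  (forall X, feas A b X -> \tr X <= Rt))
  (fstar : R) (hf : (exists2 X, feas A b X & frob C X = fstar) /\
                    (forall X, feas A b X -> fstar <= frob C X))
  (epsg epsH : R) (hepsg : 0 <= epsg) (hepsH : 0 <= epsH)
  (Y : 'M[R]_(n, n.+1)) (hY : Mp A b Y)
  (hgrad : fnorm (rgrad A C Y) <= epsg)
  (hhess : hess_ge A C Y epsH) :
  (0 <= 2%:R * (g C Y - fstar) <= epsg * Num.sqrt Rt + epsH * Rt)
  /\ ((forall X1 X2, feas A b X1 -> feas A b X2 -> \tr X1 = \tr X2) ->
      (exists2 X, feas A b X & pd X) ->
      0 <= 2%:R * (g C Y - fstar) <= epsH * Rt).
Proof.
have [[Xs Xs_feas <-] fstar_min] := hf; have Z_feas := feas_gram hY.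
set S := Smat A C Y; set Z := Y *m Y^T.
have gapE : g C Y - frob C Xs = frob S Z - frob S Xs.
  by rewrite g_gram (frob_Smat_affine C Y hY) (frob_Smat_affine C Y Xs_feas.2.1); ring.
have gap_ge0 : 0 <= 2%:R * (g C Y - frob C Xs).
  by rewrite mulr_ge0 // subr_ge0 g_gram fstar_min.
have hess_part : - (2%:R * frob S Xs) <= epsH * Rt.
  apply: le_trans (hessian_bound hA hC hhess Xs_feas.2.2) _.
  exact: ler_wpM2l (hRt.2 _ Xs_feas).
split=> [|const_tr pd_feas]; rewrite gap_ge0 gapE /=; last first.
  by rewrite (frob_Smat_gram_eq0 hA hC Y const_tr pd_feas); lra.
have grad_part : 2%:R * frob S Z <= epsg * Num.sqrt Rt.
  apply: le_trans (gradient_bound A C Y) _.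
  by apply: ler_pM; rewrite ?sqrtr_ge0 ?ler_wsqrtr ?(hRt.2 _ Z_feas).
lra.
Qed.
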